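(* For every $n \in \mathbb{N}$ there are MILP instances $I_1$ and $I_2$ with $n \times n$ constraint matrices $A_1$ and $A_2$ respectively, such that $A_1$ has primal, dual and incidence treewidth bounded by an absolute constant and $\|A_1\|_\infty = 2$, $A_2$ is a 4-block $n$-fold matrix all of whose blocks are the $1\times 1$ matrix $(1)$, and the fractionality of $I_1$ is $2^{\Omega(n)}$ while the fractionality of $I_2$ is $\Omega(n)$.
   Context: An MILP instance is $\min\{\mathbf{c}\mathbf{x} \mid A\mathbf{x}=\mathbf{b},\ \mathbf{l}\le\mathbf{x}\le\mathbf{u},\ \mathbf{x}\in\mathbb{Z}^z\times\mathbb{Q}^q\}$ with integral data. The fractionality of an instance is the minimum, over all optimal solutions $\mathbf{x}$, of the largest denominator among the entries of $\mathbf{x}$ written in lowest terms. The primal graph of $A$ has the columns as vertices, adjacent if some row is non-zero in both; the dual graph is the primal graph of $A^{\intercal}$; the incidence graph is the bipartite graph on rows and columns with a row adjacent to a column if the corresponding entry is non-zero; primal/dual/incidence treewidth is the treewidth of these graphs. A 4-block $n$-fold matrix has the block form $\begin{pmatrix} C & D & D & \cdots & D \\ B & A & & & \\ B & & A & & \\ \vdots & & & \ddots & \\ B & & & & A\end{pmatrix}$ (other blocks zero) for blocks $A,B,C,D$. *)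

From HB Require Import structures.
From mathcomp Require Import all_boot all_order all_algebra.
Set Implicit Arguments. Unset Strict Implicit. Unset Printing Implicit Defensive.
Import Order.TTheory GRing.Theory Num.Theory.
Local Open Scope ring_scope.

Definition is_tree (m : nat) (e : rel 'I_m) : Prop :=
  [/\ (0 < m)%N, symmetric e, irreflexive e,
      (forall x y, connect e x y) &
      (forall p : seq 'I_m, uniq p -> (2 < size p)%N -> ~~ cycle e p)].

Definition treewidth_le (V : finType) (g : rel V) (k : nat) : Prop :=
  exists (m : nat) (e : rel 'I_m) (B : 'I_m -> {set V}),
    [/\ is_tree e,
        (forall v : V, exists t, v \in B t),
        (forall u v : V, g u v -> exists t, (u \in B t) && (v \in B t)),
        (forall (v : V) (t1 t2 : 'I_m), v \in B t1 -> v \in B t2 ->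
           connect [rel x y | [&& e x y, v \in B x & v \in B y]] t1 t2) &
        (forall t, (#|B t| <= k.+1)%N)].

Definition primal_graph (m n : nat) (A : 'M[int]_(m, n)) : rel 'I_n :=
  fun x y => (x != y) && [exists i : 'I_m, (A i x != 0) && (A i y != 0)].

Definition dual_graph (m n : nat) (A : 'M[int]_(m, n)) : rel 'I_m :=
  primal_graph A^T.

Definition incidence_graph (m n : nat) (A : 'M[int]_(m, n))
  : rel ('I_m + 'I_n)%type :=
  fun a b => match a, b with
             | inl i, inr j => A i j != 0
             | inr j, inl i => A i j != 0
             | _, _ => false
             end.

Definition mx_maxnorm (m n : nat) (A : 'M[int]_(m, n)) : nat :=
  (\max_(i < m) \max_(j < n) absz (A i j))%N.

Definition four_block_nfold (N r t p s : nat)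
  (A : 'M[int]_(p, s)) (B : 'M[int]_(p, t))
  (C : 'M[int]_(r, t)) (D : 'M[int]_(r, s)) :=
  block_mx C (\mxrow_(k < N) D) (\mxcol_(k < N) B) (\mxblock_(i < N, j < N) (if i == j then A else 0)).

(** * MILP instances
   min { c x | A x = b, l <= x <= u, x in Z^z x Q^(n-z) }, integral data;
   variables with index < z are the integer ones. *)
Record milp (m n : nat) := Milp {
  mA : 'M[int]_(m, n);
  mb : 'I_m -> int;
  mc : 'I_n -> int;
  ml : 'I_n -> int;
  mu : 'I_n -> int;
  mz : nat }.

Definition milp_feasible (m n : nat) (I : milp m n) (x : 'I_n -> rat) : Prop :=
  [/\ (forall i : 'I_m, \sum_(j < n) (mA I i j)%:~R * x j = (mb I i)%:~R),
      (forall j : 'I_n, (ml I j)%:~R <= x j <= (mu I j)%:~R) &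
      (forall j : 'I_n, (j < mz I)%N -> x j \is a Num.int)].

Definition milp_obj (m n : nat) (I : milp m n) (x : 'I_n -> rat) : rat :=
  \sum_(j < n) (mc I j)%:~R * x j.

Definition milp_optimal (m n : nat) (I : milp m n) (x : 'I_n -> rat) : Prop :=
  milp_feasible I x /\
  forall y, milp_feasible I y -> milp_obj I x <= milp_obj I y.

Definition max_denom (n : nat) (x : 'I_n -> rat) : nat :=
  (\max_(j < n) absz (denq (x j)))%N.

(* f is the fractionality of I: the minimum over all optimal solutions
   of the largest denominator (in particular an optimal solution exists). *)
Definition is_fractionality (m n : nat) (I : milp m n) (f : nat) : Prop :=
  (exists x, milp_optimal I x /\ max_denom x = f) /\
  (forall x, milp_optimal I x -> (f <= max_denom x)%N).

From HB Require Import structures.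
From mathcomp Require Import all_boot all_order all_algebra.
From mathcomp Require Import zify ring lra.
Import Order.TTheory GRing.Theory Num.Theory.

Set Implicit Arguments.
Unset Strict Implicit.
Unset Printing Implicit Defensive.

(* In both instances the equality constraints alone determine a unique
   feasible point, so the fractionality is the largest denominator of that
   point.  The first matrix is lower bidiagonal with rows x_0 = 1 and
   x_(i-1) - 2 x_i = 0, which forces x_i = 2^-i; its primal, dual and
   incidence graphs are paths (or subgraphs of paths), and a graph whose
   vertices can be numbered injectively so that adjacent vertices get numbers
   at distance at most w has a path decomposition of width w.  The 4-block
   n-fold matrix with all blocks (1) is the arrowhead matrix; with right-hand
   side e_0 it forces x_0 = -1/(n-1) and x_i = 1/(n-1) for i > 0. *)

Lemma uniq_next_neq_prev (T : eqType) (p : seq T) (x : T) :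
  uniq p -> (2 < size p)%N -> x \in p -> next p x != prev p x.
Proof.
move=> up sp /rot_to [i s def_p].
rewrite -(next_rot i up) -(prev_rot i up) def_p.
have /andP [xNs us] : uniq (x :: s) by rewrite -def_p rot_uniq.
have : (1 < size s)%N by rewrite -ltnS -[(size s).+1]/(size (x :: s)) -def_p size_rot.
rewrite next_nth prev_nth mem_head /= eqxx (memNindex xNs) (nth_last x (x :: s)).
case: s {def_p} xNs us => [|y [|z s]] //= _ /andP [yNzs _] _.
by apply: contraNneq yNzs => ->; apply: mem_last.
Qed.

Definition path_rel (N : nat) : rel 'I_N :=
  fun x y => (x.+1 == y :> nat) || (y.+1 == x :> nat).

Lemma path_rel_sym N : symmetric (@path_rel N).
Proof. by move=> x y; rewrite /path_rel orbC. Qed.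

Lemma path_rel_irr N : irreflexive (@path_rel N).
Proof. by move=> x; rewrite /path_rel; apply/negP; lia. Qed.

(* Both cycle neighbours of the largest vertex would be its predecessor. *)
Lemma path_rel_acyclic N (p : seq 'I_N) :
  uniq p -> (2 < size p)%N -> ~~ cycle (@path_rel N) p.
Proof.
move=> up sp; apply/negP => cp.
have [x0 x0p] : exists x0, x0 \in p.
  by case: p sp {up cp} => [|x s] // _; exists x; rewrite mem_head.
case: (@arg_maxnP _ _ (fun i => i \in p) val x0p) => M Mp Mmax.
have le_nM : (next p M <= M)%N by apply: Mmax; rewrite mem_next.
have le_pM : (prev p M <= M)%N by apply: Mmax; rewrite mem_prev.
have := next_cycle cp Mp; have := prev_cycle cp Mp.
have := uniq_next_neq_prev up sp Mp.
rewrite -(inj_eq val_inj) /path_rel /=; lia.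
Qed.

Lemma connect_path_rel_interval N (P : pred 'I_N) (x y : 'I_N) :
  (x <= y)%N -> (forall t : 'I_N, (x <= t <= y)%N -> P t) ->
  connect [rel a b | [&& path_rel a b, P a & P b]] x y.
Proof.
move def_d : (y - x)%N => d; elim: d y def_d => [|d IHd] y def_d le_xy P_xy.
  by have -> : y = x by apply: val_inj => /=; lia.
have y'N : (y.-1 < N)%N by have := ltn_ord y; lia.
have y'E : Ordinal y'N = y.-1 :> nat by [].
apply: connect_trans (IHd (Ordinal y'N) _ _ _) (connect1 _); rewrite ?y'E; try lia.
- by move=> t le_t; apply: P_xy; lia.
- by rewrite /= /path_rel y'E !P_xy ?andbT; lia.
Qed.

Lemma connect_path_rel_between N (P : pred 'I_N) (x y : 'I_N) :
  (forall t : 'I_N, (minn x y <= t <= maxn x y)%N -> P t) ->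
  connect [rel a b | [&& path_rel a b, P a & P b]] x y.
Proof.
have sym : connect_sym [rel a b | [&& path_rel a b, P a & P b]].
  by apply: sym_connect_sym => a b /=; rewrite path_rel_sym [P a && _]andbC.
case: (leqP x y) => [le_xy|/ltnW le_yx] P_xy.
  by apply: connect_path_rel_interval => // t; move/P_xy.
rewrite sym; apply: connect_path_rel_interval => // t le_t; apply: P_xy; lia.
Qed.

Lemma is_tree_path_rel N : (0 < N)%N -> is_tree (@path_rel N).
Proof.
move=> N_gt0; split=> //;
  [exact: path_rel_sym | exact: path_rel_irr | | exact: path_rel_acyclic].
move=> x y; apply: (connect_sub _ (connect_path_rel_between (P := predT) _)) => //.
by move=> a b /andP [ab _]; apply: connect1.
Qed.

Lemma treewidth_le_bandwidth (V : finType) (g : rel V) (N w : nat) (pos : V -> nat) :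
  (0 < N)%N -> (forall v, pos v < N)%N -> injective pos ->
  (forall u v, g u v -> pos u <= pos v + w /\ pos v <= pos u + w)%N ->
  treewidth_le g w.
Proof.
move=> N_gt0 posN pos_inj g_band.
pose B (t : 'I_N) := [set v | t <= pos v <= t + w]%N.
exists N, (@path_rel N), B; split.
- exact: is_tree_path_rel.
- by move=> v; exists (Ordinal (posN v)); rewrite inE /=; lia.
- move=> u v /g_band band.
  exists (if (pos u <= pos v)%N then Ordinal (posN u) else Ordinal (posN v)).
  by case: ifP => le_uv; rewrite !inE /=; lia.
- move=> v t1 t2; rewrite !inE => v_t1 v_t2.
  by apply: connect_path_rel_between => t ?; rewrite inE; lia.
- move=> t; rewrite cardE -(size_map pos) -(size_iota t w.+1).
  apply: uniq_leq_size; first by rewrite map_inj_uniq ?enum_uniq.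
  by move=> k /mapP [v]; rewrite mem_enum inE => v_t ->; rewrite mem_iota; lia.
Qed.

Local Open Scope ring_scope.

Lemma is_fractionality_unique_feasible m n (I : milp m n) (x : 'I_n -> rat) :
  milp_feasible I x -> (forall y, milp_feasible I y -> y =1 x) ->
  is_fractionality I (max_denom x).
Proof.
move=> feas_x uniq_x; split.
  exists x; split=> //; split=> // y /uniq_x y_x.
  by rewrite /milp_obj; under [X in _ <= X]eq_bigr => j _ do rewrite y_x.
move=> y [/uniq_x y_x _].
by rewrite /max_denom; under [X in (_ <= X)%N]eq_bigr => j _ do rewrite y_x.
Qed.

Lemma denq_invn (k : nat) : (0 < k)%N -> denq (k%:R^-1 : rat) = k.
Proof. by move=> k_gt0; rewrite pmulrn denqVz // lt0r_neq0 ?ltz_nat. Qed.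

Definition halving_mx n : 'M[int]_n :=
  \matrix_(i, j) ((if i == j then (if i == 0%N :> nat then 1 else -2) else 0)
                  + (i == j.+1 :> nat)%:R).

Definition halving_milp n : milp n n :=
  Milp (halving_mx n) (fun i => (i == 0%N :> nat)%:R) (fun _ => 0)
       (fun _ => 0) (fun _ => 1) 0.

Definition halving_sol {n} (j : 'I_n) : rat := 2 ^- j.

Lemma halving_mx_support n (i j : 'I_n) :
  halving_mx n i j != 0 -> (j <= i <= j.+1)%N.
Proof.
rewrite mxE; case: (eqVneq i j) => [-> _|_]; first lia.
by case: (eqVneq (i : nat) j.+1) => [-> _|_]; [lia | rewrite add0r eqxx].
Qed.

Lemma halving_mx_row0 n (i : 'I_n) (y : 'I_n -> rat) : i = 0%N :> nat ->
  \sum_j (halving_mx n i j)%:~R * y j = y i.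
Proof.
move=> i0; rewrite (bigD1 i) //= big1 ?addr0 => [|j ne_ji].
  by rewrite mxE eqxx i0 /= addr0 mul1r.
by rewrite mxE eq_sym (negbTE ne_ji) i0 add0r mul0r.
Qed.

Lemma halving_mx_rowS n (i j : 'I_n) (y : 'I_n -> rat) : i = j.+1 :> nat ->
  \sum_k (halving_mx n i k)%:~R * y k = y j - 2 * y i.
Proof.
move=> ij; have ne_ij : i != j by rewrite -(inj_eq val_inj) /= ij; lia.
rewrite (bigD1 i) // (bigD1 j) 1?eq_sym //= big1 ?addr0 => [|k /andP [ne_ki ne_kj]].
  rewrite !mxE eqxx (negbTE ne_ij) ij !eqxx /= (ltn_eqF (ltnSn _)) addr0 add0r; ring.
rewrite mxE eq_sym (negbTE ne_ki) add0r ij eqSS (inj_eq val_inj).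
by rewrite eq_sym (negbTE ne_kj) mul0r.
Qed.

Lemma halving_sol_feasible n : milp_feasible (halving_milp n) halving_sol.
Proof.
split=> [i|j|//] /=.
  case: i => [[|k] lt_kn]; first by rewrite halving_mx_row0 // /halving_sol expr0 invr1.
  have lt_k : (k < n)%N by lia.
  rewrite (halving_mx_rowS (j := Ordinal lt_k)) //= /halving_sol exprS invfM.
  by rewrite mulrA divff ?mul1r ?subrr.
rewrite /halving_sol invr_ge0 exprn_ge0 //= invf_le1 ?exprn_gt0 //.
by rewrite exprn_ege1.
Qed.

Lemma halving_sol_unique n (y : 'I_n -> rat) :
  milp_feasible (halving_milp n) y -> y =1 halving_sol.
Proof.
case=> rows _ _ [k lt_kn]; elim: k lt_kn => [|k IHk] lt_kn.
  by rewrite -(halving_mx_row0 y (i := Ordinal lt_kn)) // rows /halving_sol expr0 invr1.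
have lt_k : (k < n)%N by lia.
have := rows (Ordinal lt_kn); rewrite (halving_mx_rowS (j := Ordinal lt_k)) //= IHk.
rewrite /halving_sol exprS invfM => /eqP; rewrite subr_eq0 => /eqP ->.
by rewrite mulrA mulVf ?mul1r.
Qed.

Lemma max_denom_halving_sol n : (0 < n)%N -> (2 ^ n.-1 <= max_denom (@halving_sol n))%N.
Proof.
move=> n_gt0; have lt_n1n : (n.-1 < n)%N by lia.
apply: leq_trans (leq_bigmax (Ordinal lt_n1n)).
by rewrite /halving_sol -natrX denq_invn ?expn_gt0.
Qed.

Lemma mx_maxnorm_halving_mx n : (1 < n)%N -> mx_maxnorm (halving_mx n) = 2%N.
Proof.
move=> n_gt1; apply/eqP; rewrite eqn_leq; apply/andP; split.
  apply/bigmax_leqP => i _; apply/bigmax_leqP => j _.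
  by rewrite mxE; case: (i == j); case: (i == 0%N :> nat); case: (i == j.+1 :> nat).
pose o1 := Ordinal n_gt1.
apply: leq_trans (leq_bigmax o1); apply: leq_trans (leq_bigmax o1).
by rewrite mxE eqxx.
Qed.

Lemma treewidth_primal_halving_mx n : treewidth_le (primal_graph (halving_mx n)) 1.
Proof.
apply: (@treewidth_le_bandwidth _ _ n.+1 1 (@nat_of_ord n)) => //.
- by move=> v; apply: leqW.
- exact: ord_inj.
move=> u v /andP [_ /existsP [i]].
by move=> /andP [/halving_mx_support ? /halving_mx_support ?]; lia.
Qed.

Lemma treewidth_dual_halving_mx n : treewidth_le (dual_graph (halving_mx n)) 1.
Proof.
apply: (@treewidth_le_bandwidth _ _ n.+1 1 (@nat_of_ord n)) => //.
- by move=> v; apply: leqW.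
- exact: ord_inj.
move=> u v /andP [_ /existsP [j]]; rewrite ![(halving_mx n)^T _ _]mxE.
by move=> /andP [/halving_mx_support ? /halving_mx_support ?]; lia.
Qed.

Lemma treewidth_incidence_halving_mx n :
  treewidth_le (incidence_graph (halving_mx n)) 1.
Proof.
pose pos (v : 'I_n + 'I_n) := match v with inl i => (2 * i)%N | inr j => (2 * j).+1 end.
apply: (@treewidth_le_bandwidth _ _ (2 * n).+1 1 pos) => //.
- by case=> v /=; have := ltn_ord v; lia.
- case=> [i|j] [i'|j'] /= eq_pos; try lia.
  + by congr inl; apply: ord_inj; lia.
  + by congr inr; apply: ord_inj; lia.
- by case=> [i|j] [i'|j'] //= /halving_mx_support; lia.
Qed.

Lemma tagnat_sig1_ones_inj n : injective (@tagnat.sig1 n (fun _ => 1%N)).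
Proof.
move=> s s' eq_s; apply: tagnat.sig_inj; rewrite !tagnat.sigE12.
move: (tagnat.sig2 s) (tagnat.sig2 s'); rewrite eq_s => k k'.
by rewrite !ord1.
Qed.

Definition arrow_mx m : 'M[int]_(1 + m) :=
  \matrix_(i, j) ((i == 0%N :> nat) || (j == 0%N :> nat) || (i == j))%:R.

Lemma four_block_nfold_ones n :
  four_block_nfold n (const_mx 1) (const_mx 1) (const_mx 1) (const_mx 1)
  = arrow_mx (\sum_(i < n) 1).
Proof.
apply/matrixP => i j; rewrite -[i]splitK -[j]splitK.
case: (split i) => [[[|//] ?]|a]; case: (split j) => [[[|//] ?]|b];
  rewrite /four_block_nfold /= ?block_mxEul ?block_mxEur ?block_mxEdl ?block_mxEdr
          !mxE //.
have -> : (rshift 1 a == rshift 1 b) = (a == b) by apply: inj_eq; apply: rshift_inj.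
rewrite -(inj_eq (@tagnat_sig1_ones_inj n)).
by case: eqP; rewrite mxE.
Qed.

Definition arrow_milp m : milp (1 + m) (1 + m) :=
  Milp (arrow_mx m) (fun i => (i == 0%N :> nat)%:R) (fun _ => 0)
       (fun _ => -1) (fun _ => 1) 0.

Definition arrow_sol {m} (j : 'I_(1 + m)) : rat :=
  if j == 0%N :> nat then - (m.-1)%:R^-1 else (m.-1)%:R^-1.

Lemma arrow_mx_row0 m (y : 'I_(1 + m) -> rat) :
  \sum_j (arrow_mx m (lshift m ord0) j)%:~R * y j
  = y (lshift m ord0) + \sum_(a < m) y (rshift 1 a).
Proof.
rewrite big_split_ord big_ord1 /=; congr (_ + _); first by rewrite mxE mul1r.
by apply: eq_bigr => a _; rewrite mxE mul1r.
Qed.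

Lemma arrow_mx_rowS m (a : 'I_m) (y : 'I_(1 + m) -> rat) :
  \sum_j (arrow_mx m (rshift 1 a) j)%:~R * y j
  = y (lshift m ord0) + y (rshift 1 a).
Proof.
rewrite big_split_ord big_ord1 /= mxE mul1r (bigD1 a) //= big1 => [|b ne_ba].
  by rewrite mxE eqxx orbT mul1r addr0.
by rewrite mxE /= (inj_eq (@rshift_inj _ _)) eq_sym (negbTE ne_ba) mul0r.
Qed.

Lemma arrow_sol_feasible m : (1 < m)%N -> milp_feasible (arrow_milp m) arrow_sol.
Proof.
move=> m_gt1; have m1_gt0 : 0 < (m.-1)%:R :> rat by rewrite ltr0n; lia.
have m_pred : m%:R = (m.-1)%:R + 1 :> rat by rewrite natr1 prednK // ltnW.
split=> [i|j|//] /=.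
  rewrite -[i]splitK; case: (split i) => [i0|a] /=.
  - rewrite (ord1 i0) arrow_mx_row0 /arrow_sol /= sumr_const card_ord.
    by rewrite -[_ *+ m]mulr_natl m_pred; field; apply: lt0r_neq0.
  - by rewrite arrow_mx_rowS /arrow_sol /= addNr.
rewrite /arrow_sol; set q := (m.-1)%:R^-1.
have q_le1 : q <= 1 by rewrite invf_le1 // ler1n; lia.
have q_gt0 : 0 < q by rewrite invr_gt0.
by case: ifP => _; apply/andP; split; lra.
Qed.

Lemma arrow_sol_unique m (y : 'I_(1 + m) -> rat) : (1 < m)%N ->
  milp_feasible (arrow_milp m) y -> y =1 arrow_sol.
Proof.
move=> m_gt1 [rows _ _]; set y0 := y (lshift m ord0).
have m1_neq0 : (m.-1)%:R != 0 :> rat by rewrite pnatr_eq0 -lt0n; lia.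
have m_pred : m%:R = (m.-1)%:R + 1 :> rat by rewrite natr1 prednK // ltnW.
have y_rshift a : y (rshift 1 a) = - y0.
  by have := rows (rshift 1 a); rewrite /= arrow_mx_rowS /=; rewrite /y0; lra.
have y0E : y0 = - (m.-1)%:R^-1.
  have := rows (lshift m ord0); rewrite /= arrow_mx_row0.
  under eq_bigr do rewrite y_rshift.
  rewrite sumr_const card_ord -[_ *+ m]mulr_natl m_pred -/y0 => top.
  by apply: (mulIf m1_neq0); rewrite mulNr mulVf //; lra.
move=> j; rewrite -[j]splitK /arrow_sol; case: (split j) => [j0|a] /=.
  by rewrite (ord1 j0).
by rewrite y_rshift y0E opprK.
Qed.

Lemma max_denom_arrow_sol m : (1 < m)%N -> (m.-1 <= max_denom (@arrow_sol m))%N.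
Proof.
move=> m_gt1; apply: leq_trans (leq_bigmax (lshift m ord0)).
by rewrite /arrow_sol /= denqN denq_invn //; lia.
Qed.

Theorem lemma1 :
  exists (k a c n0 : nat), (0 < a)%N /\ (0 < c)%N /\
  forall n : nat, (n0 <= n)%N ->
    exists (I1 : milp n n)
           (I2 : milp (1 + \sum_(i < n) 1) (1 + \sum_(i < n) 1))
           (f1 f2 : nat),
      [/\ treewidth_le (primal_graph (mA I1)) k,
          treewidth_le (dual_graph (mA I1)) k,
          treewidth_le (incidence_graph (mA I1)) k,
          mx_maxnorm (mA I1) = 2%N &
          mA I2 = four_block_nfold n (const_mx 1%R) (const_mx 1%R)
                                     (const_mx 1%R) (const_mx 1%R)] /\
      [/\ is_fractionality I1 f1, is_fractionality I2 f2,
          (2 ^ (n %/ a) <= f1)%N & (n <= c * f2)%N].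
Proof.
exists 1%N, 2%N, 2%N, 2%N; do 2!split=> //; move=> n n_ge2.
have sum1E : (\sum_(i < n) 1)%N = n by rewrite sum1_card card_ord.
exists (halving_milp n), (arrow_milp (\sum_(i < n) 1)).
exists (max_denom (@halving_sol n)), (max_denom (@arrow_sol (\sum_(i < n) 1))).
split; split.
- exact: treewidth_primal_halving_mx.
- exact: treewidth_dual_halving_mx.
- exact: treewidth_incidence_halving_mx.
- exact: mx_maxnorm_halving_mx.
- exact/esym/four_block_nfold_ones.
- apply: is_fractionality_unique_feasible; first exact: halving_sol_feasible.
  exact: halving_sol_unique.
- have m_gt1 : (1 < \sum_(i < n) 1)%N by rewrite sum1E.
  apply: is_fractionality_unique_feasible; first exact: arrow_sol_feasible.
  by move=> y; apply: arrow_sol_unique.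
- apply: leq_trans (max_denom_halving_sol _); last by lia.
  by rewrite leq_pexp2l //; lia.
- by have := max_denom_arrow_sol (m := \sum_(i < n) 1); rewrite sum1E; lia.
Qed.
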